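(* For every integer $b\geq 2$, $$\bar J(b)+\frac{(-1)^{b-1}}{2^b}J(b)=\lambda(b)\ln 2+\sum_{j=1}^{b-2}\frac{(-1)^{j+1}}{2^{j+1}}\lambda(b-j)\zeta(j+1),$$ where an empty sum equals $0$.
   Context: $S_n=1+\frac13+\cdots+\frac{1}{2n-1}$ for $n\geq 1$. For $b>1$, $J(b)=\sum_{n\geq 1}\frac{S_n}{n^b}$ and $\bar J(b)=\sum_{n\geq 1}\frac{S_n}{(2n-1)^b}$. For real $s>1$, $\lambda(s)=\sum_{n\geq 1}\frac{1}{(2n-1)^s}=(1-2^{-s})\zeta(s)$, and $\zeta$ is the Riemann zeta function. *)

From Stdlib Require Import Reals.
From Coquelicot Require Import Coquelicot.
Open Scope R_scope.

Definition Sodd (n : nat) : R := sum_n_m (fun k => / (2 * INR k - 1)) 1 n.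

Definition zeta (s : nat) : R := Series (fun n => / (INR (S n)) ^ s).

Definition lambda (s : nat) : R := Series (fun n => / (2 * INR n + 1) ^ s).

Definition J (b : nat) : R := Series (fun n => Sodd (S n) / (INR (S n)) ^ b).

Definition Jbar (b : nat) : R :=
  Series (fun n => Sodd (S n) / (2 * INR (S n) - 1) ^ b).

From Stdlib Require Import Reals Lra Lia.
From Coquelicot Require Import Coquelicot.
Open Scope R_scope.

(* Partial fractions in [x = 2k + 1] and [z = -2m] give
     sum_{j < b} x^(j-b) z^(-j-1) = (z^(-b) - x^(-b)) / (x - z),   x - z = 2(k + m) + 1,
   so summing over [0 <= k < N] and [1 <= m <= N] turns the truncated products
   [lambda_N(b - j) zeta_N(j + 1)] into the truncated sums of [J(b)] and [Jbar(b)], up to errors bounded by [H_N / (2N + 1)],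
   which tend to [0] by Cesaro.  The extreme terms [j = 0] and [j = b - 1] combine into
   [lambda_N(b) (S_N - H_N / 2) = lambda_N(b) (H_2N - H_N)], which tends to [lambda(b) ln 2]. *)

Fixpoint psum (f : nat -> R) (n : nat) : R :=
  match n with O => 0 | S n => psum f n + f n end.

Lemma psum_S f n : psum f (S n) = psum f n + f n.
Proof. reflexivity. Qed.

Lemma psum_ext f g n : (forall i, (i < n)%nat -> f i = g i) -> psum f n = psum g n.
Proof.
  induction n as [|n IH]; intros H; simpl; [reflexivity|].
  rewrite IH, H; auto with arith.
Qed.

Lemma psum_zero n : psum (fun _ => 0) n = 0.
Proof. induction n as [|n IH]; simpl; [reflexivity|]; rewrite IH; ring. Qed.

Lemma psum_plus f g n : psum (fun i => f i + g i) n = psum f n + psum g n.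
Proof. induction n as [|n IH]; simpl; [ring|]; rewrite IH; ring. Qed.

Lemma psum_minus f g n : psum (fun i => f i - g i) n = psum f n - psum g n.
Proof. induction n as [|n IH]; simpl; [ring|]; rewrite IH; ring. Qed.

Lemma psum_scal_l c f n : psum (fun i => c * f i) n = c * psum f n.
Proof. induction n as [|n IH]; simpl; [ring|]; rewrite IH; ring. Qed.

Lemma psum_le f g n : (forall i, (i < n)%nat -> f i <= g i) -> psum f n <= psum g n.
Proof.
  induction n as [|n IH]; intros H; simpl; [lra|].
  apply Rplus_le_compat; [apply IH; auto with arith | apply H; auto].
Qed.

Lemma psum_nonneg f n : (forall i, (i < n)%nat -> 0 <= f i) -> 0 <= psum f n.
Proof. intros H. rewrite <- (psum_zero n). apply psum_le, H. Qed.

Lemma psum_swap (f : nat -> nat -> R) n m :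
  psum (fun i => psum (fun j => f i j) m) n = psum (fun j => psum (fun i => f i j) n) m.
Proof.
  induction n as [|n IH]; simpl; [now rewrite psum_zero|].
  rewrite IH, <- psum_plus. reflexivity.
Qed.

Lemma psum_mult f g n m :
  psum f n * psum g m = psum (fun i => psum (fun j => f i * g j) m) n.
Proof.
  rewrite Rmult_comm, <- psum_scal_l. apply psum_ext; intros i _.
  rewrite Rmult_comm, <- psum_scal_l. reflexivity.
Qed.

Lemma psum_shift f c n : psum (fun k => f (c + k)%nat) n = psum f (c + n) - psum f c.
Proof.
  induction n as [|n IH]; simpl; [rewrite Nat.add_0_r; ring|].
  rewrite IH, Nat.add_succ_r. simpl. ring.
Qed.

Lemma psum_succ_l f n : psum f (S n) = f 0%nat + psum (fun i => f (S i)) n.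
Proof.
  induction n as [|n IH]; [simpl; ring|].
  change (psum f (S n) + f (S n) = f 0%nat + (psum (fun i => f (S i)) n + f (S n))).
  rewrite IH. ring.
Qed.

Lemma sum_n_m_1_psum f n : sum_n_m f 1 n = psum (fun j => f (S j)) n.
Proof.
  induction n as [|n IH]; [now rewrite sum_n_m_zero by lia|].
  rewrite sum_n_Sm, IH by lia. reflexivity.
Qed.

Lemma sum_f_R0_psum f n : sum_f_R0 f n = psum f (S n).
Proof. induction n as [|n IH]; simpl in *; [ring|]; rewrite IH; ring. Qed.

Lemma is_lim_seq_psum_Series a : ex_series a -> is_lim_seq (psum a) (Series a).
Proof.
  intros Ha. apply Series_correct in Ha.
  apply is_lim_seq_incr_1. eapply is_lim_seq_ext; [|exact Ha].
  intros n. rewrite sum_n_Reals. apply sum_f_R0_psum.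
Qed.

Lemma is_lim_seq_sum_n_m (F : nat -> nat -> R) (L : nat -> R) m n :
  (forall j, (m <= j <= n)%nat -> is_lim_seq (F j) (L j)) ->
  is_lim_seq (fun N => sum_n_m (fun j => F j N) m n) (sum_n_m L m n).
Proof.
  induction n as [|n IH]; intros H.
  - destruct m.
    + rewrite sum_n_n. apply (is_lim_seq_ext (F 0%nat)); [intros; now rewrite sum_n_n|].
      apply H; lia.
    + rewrite sum_n_m_zero by lia.
      apply (is_lim_seq_ext (fun _ => 0)); [intros; now rewrite sum_n_m_zero by lia|].
      apply is_lim_seq_const.
  - destruct (Nat.le_gt_cases m (S n)) as [Hmn|Hmn].
    + rewrite sum_n_Sm by lia.
      apply (is_lim_seq_ext (fun N => sum_n_m (fun j => F j N) m n + F (S n) N));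
        [intros; now rewrite sum_n_Sm by lia|].
      apply is_lim_seq_plus'; [apply IH; intros j Hj; apply H | apply H]; lia.
    + rewrite sum_n_m_zero by lia.
      apply (is_lim_seq_ext (fun _ => 0)); [intros; now rewrite sum_n_m_zero by lia|].
      apply is_lim_seq_const.
Qed.

Definition odd_harmonic (n : nat) : R := psum (fun i => / (2 * INR i + 1)) n.
Definition inv_pow_nat (s m : nat) : R := / INR (S m) ^ s.
Definition inv_pow_odd (s k : nat) : R := / (2 * INR k + 1) ^ s.

Lemma Sodd_odd_harmonic n : Sodd n = odd_harmonic n.
Proof.
  unfold Sodd, odd_harmonic. rewrite sum_n_m_1_psum.
  apply psum_ext; intros i _. rewrite S_INR. f_equal. ring.
Qed.

Lemma odd_pos k : 0 < 2 * INR k + 1.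
Proof. pose proof (pos_INR k). lra. Qed.

Lemma INR_S_ge1 n : 1 <= INR (S n).
Proof. rewrite S_INR. pose proof (pos_INR n). lra. Qed.

Lemma odd_harmonic_nonneg n : 0 <= odd_harmonic n.
Proof. apply psum_nonneg; intros i _. left. apply Rinv_0_lt_compat, odd_pos. Qed.

Lemma odd_harmonic_S_ge1 n : 1 <= odd_harmonic (S n).
Proof.
  unfold odd_harmonic. rewrite psum_succ_l. change (INR 0) with 0. rewrite Rmult_0_r, Rplus_0_l, Rinv_1.
  enough (0 <= psum (fun i => / (2 * INR (S i) + 1)) n) by lra.
  apply psum_nonneg; intros i _. left. apply Rinv_0_lt_compat, odd_pos.
Qed.

Lemma inv_pow_nat_bounds s m : (2 <= s)%nat -> 0 <= inv_pow_nat s m <= inv_pow_nat 2 m.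
Proof.
  intros Hs. pose proof (INR_S_ge1 m). unfold inv_pow_nat. split.
  - left. apply Rinv_0_lt_compat, pow_lt. lra.
  - apply Rinv_le_contravar; [apply pow_lt; lra | now apply Rle_pow].
Qed.

Lemma inv_pow_odd_bounds s k : 0 <= inv_pow_odd s k <= inv_pow_nat s k.
Proof.
  pose proof (INR_S_ge1 k). pose proof (pos_INR k). unfold inv_pow_odd, inv_pow_nat. split.
  - left. apply Rinv_0_lt_compat, pow_lt, odd_pos.
  - apply Rinv_le_contravar; [apply pow_lt; lra|].
    apply pow_incr. rewrite S_INR. lra.
Qed.

Lemma ex_series_le_nonneg a c : (forall n, 0 <= a n <= c n) -> ex_series c -> ex_series a.
Proof.
  intros H Hc. apply (ex_series_le a c); [|exact Hc]. intros n.
  change (Rabs (a n) <= c n). rewrite Rabs_pos_eq; apply H.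
Qed.

Lemma ex_series_telescoping_bound a c :
  (forall n, 0 <= a n <= c n - c (S n)) -> (forall n, 0 <= c n) -> ex_series a.
Proof.
  intros Ha Hc.
  assert (Hsum : forall n, psum a n <= c 0%nat - c n).
  { induction n as [|n IH]; simpl; [lra|]. specialize (Ha n). lra. }
  destruct (ex_finite_lim_seq_incr (sum_n a) (c 0%nat)) as [l Hl].
  - intros n. rewrite !sum_n_Reals, !sum_f_R0_psum. simpl. specialize (Ha (S n)). lra.
  - intros n. rewrite sum_n_Reals, sum_f_R0_psum. specialize (Hsum (S n)). specialize (Hc (S n)). lra.
  - now exists l.
Qed.

(* With [c n = (2 S_n + 3) / (2n + 1)] the series [S_{n+1} / (n+1)^2] telescopes from above. *)
Lemma J2_term_telescoping n :
  0 <= odd_harmonic (S n) * inv_pow_nat 2 n <=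
  (2 * odd_harmonic n + 3) / (2 * INR n + 1)
  - (2 * odd_harmonic (S n) + 3) / (2 * INR (S n) + 1).
Proof.
  pose proof (odd_harmonic_nonneg n) as Hs. pose proof (odd_pos n) as Hd.
  change (odd_harmonic (S n)) with (odd_harmonic n + / (2 * INR n + 1)).
  unfold inv_pow_nat. rewrite S_INR.
  replace (INR n + 1) with ((2 * INR n + 1 + 1) / 2) by field.
  replace (2 * ((2 * INR n + 1 + 1) / 2) + 1) with (2 * INR n + 1 + 2) by field.
  set (s := odd_harmonic n) in *. set (d := 2 * INR n + 1) in *.
  assert (Hd1 : 1 <= d) by (unfold d; pose proof (pos_INR n); lra).
  split.
  - apply Rmult_le_pos; [|left; apply Rinv_0_lt_compat, pow_lt; lra].
    assert (0 < / d) by (apply Rinv_0_lt_compat; lra). lra.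
  - apply Rge_le, Rminus_ge, Rle_ge.
    replace (_ - _) with (4 * (s + d ^ 2 + d - 1) / (d * (d + 1) ^ 2 * (d + 2))) by (field; lra).
    apply Rmult_le_pos; [nra|]. left. apply Rinv_0_lt_compat. apply Rmult_lt_0_compat; [|lra]. nra.
Qed.

Lemma ex_series_J2 : ex_series (fun n => odd_harmonic (S n) * inv_pow_nat 2 n).
Proof.
  apply (ex_series_telescoping_bound _ (fun n => (2 * odd_harmonic n + 3) / (2 * INR n + 1))).
  - apply J2_term_telescoping.
  - intros n. pose proof (odd_harmonic_nonneg n). pose proof (odd_pos n).
    apply Rmult_le_pos; [lra|]. left. now apply Rinv_0_lt_compat.
Qed.

Lemma J_term_bounds b n : (2 <= b)%nat ->
  0 <= odd_harmonic (S n) * inv_pow_nat b n <= odd_harmonic (S n) * inv_pow_nat 2 n.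
Proof.
  intros Hb. pose proof (odd_harmonic_nonneg (S n)). pose proof (inv_pow_nat_bounds b n Hb).
  split; [apply Rmult_le_pos | apply Rmult_le_compat_l]; tauto.
Qed.

Lemma Jbar_term_bounds b n : (2 <= b)%nat ->
  0 <= odd_harmonic (S n) * inv_pow_odd b n <= odd_harmonic (S n) * inv_pow_nat 2 n.
Proof.
  intros Hb. pose proof (odd_harmonic_nonneg (S n)).
  pose proof (inv_pow_nat_bounds b n Hb). pose proof (inv_pow_odd_bounds b n).
  split; [apply Rmult_le_pos | apply Rmult_le_compat_l]; lra.
Qed.

Lemma zeta_term_bounds s n : (2 <= s)%nat ->
  0 <= inv_pow_nat s n <= odd_harmonic (S n) * inv_pow_nat 2 n.
Proof.
  intros Hs. pose proof (odd_harmonic_S_ge1 n). pose proof (inv_pow_nat_bounds s n Hs).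
  split; [lra|]. rewrite <- (Rmult_1_l (inv_pow_nat s n)).
  apply Rmult_le_compat; lra.
Qed.

Lemma lambda_term_bounds s n : (2 <= s)%nat ->
  0 <= inv_pow_odd s n <= odd_harmonic (S n) * inv_pow_nat 2 n.
Proof.
  intros Hs. pose proof (zeta_term_bounds s n Hs). pose proof (inv_pow_odd_bounds s n). lra.
Qed.

Definition zeta_partial (s N : nat) : R := psum (inv_pow_nat s) N.
Definition lambda_partial (s N : nat) : R := psum (inv_pow_odd s) N.
Definition J_partial (b N : nat) : R := psum (fun m => odd_harmonic (S m) * inv_pow_nat b m) N.
Definition Jbar_partial (b N : nat) : R :=
  psum (fun k => odd_harmonic (S k) * inv_pow_odd b k) N.

Lemma is_lim_seq_zeta_partial s : (2 <= s)%nat -> is_lim_seq (zeta_partial s) (zeta s).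
Proof.
  intros Hs. apply is_lim_seq_psum_Series.
  apply (ex_series_le_nonneg _ _ (fun n => zeta_term_bounds s n Hs)), ex_series_J2.
Qed.

Lemma is_lim_seq_lambda_partial s : (2 <= s)%nat -> is_lim_seq (lambda_partial s) (lambda s).
Proof.
  intros Hs. apply is_lim_seq_psum_Series.
  apply (ex_series_le_nonneg _ _ (fun n => lambda_term_bounds s n Hs)), ex_series_J2.
Qed.

Lemma is_lim_seq_J_partial b : (2 <= b)%nat -> is_lim_seq (J_partial b) (J b).
Proof.
  intros Hb. unfold J.
  erewrite Series_ext by (intros n; now rewrite Sodd_odd_harmonic).
  apply is_lim_seq_psum_Series.
  apply (ex_series_le_nonneg _ _ (fun n => J_term_bounds b n Hb)), ex_series_J2.
Qed.

Lemma is_lim_seq_Jbar_partial b : (2 <= b)%nat -> is_lim_seq (Jbar_partial b) (Jbar b).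
Proof.
  intros Hb. unfold Jbar.
  erewrite Series_ext.
  2:{ intros n. rewrite Sodd_odd_harmonic, S_INR.
      replace (2 * (INR n + 1) - 1) with (2 * INR n + 1) by ring. reflexivity. }
  apply is_lim_seq_psum_Series.
  apply (ex_series_le_nonneg _ _ (fun n => Jbar_term_bounds b n Hb)), ex_series_J2.
Qed.

Definition tail_error (w : nat -> R) (N : nat) : R :=
  psum (fun m => (odd_harmonic (S m + N) - odd_harmonic N) * w m) N.

Lemma odd_harmonic_increment N j :
  0 <= odd_harmonic (N + j) - odd_harmonic N <= INR j / (2 * INR N + 1).
Proof.
  pose proof (odd_pos N).
  induction j as [|j IH]; [rewrite Nat.add_0_r; simpl; unfold Rdiv; lra|].
  rewrite Nat.add_succ_r.
  change (odd_harmonic (S (N + j))) with (odd_harmonic (N + j) + / (2 * INR (N + j) + 1)).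
  assert (0 < / (2 * INR (N + j) + 1)) by apply Rinv_0_lt_compat, odd_pos.
  assert (/ (2 * INR (N + j) + 1) <= / (2 * INR N + 1)).
  { apply Rinv_le_contravar; auto. rewrite plus_INR. pose proof (pos_INR j). lra. }
  rewrite S_INR. unfold Rdiv in *. lra.
Qed.

Lemma tail_error_bounds w N : (forall m, 0 <= w m <= inv_pow_nat 2 m) ->
  0 <= tail_error w N <= zeta_partial 1 N / (2 * INR N + 1).
Proof.
  intros Hw. unfold tail_error, zeta_partial, Rdiv. rewrite Rmult_comm, <- psum_scal_l.
  split; [apply psum_nonneg | apply psum_le]; intros m _;
    pose proof (odd_harmonic_increment N (S m)) as Hinc; rewrite Nat.add_comm in Hinc;
    specialize (Hw m).
  - apply Rmult_le_pos; lra.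
  - pose proof (INR_S_ge1 m). pose proof (odd_pos N).
    unfold inv_pow_nat in *. rewrite pow_1.
    apply (Rle_trans _ (INR (S m) / (2 * INR N + 1) * / INR (S m) ^ 2)).
    + apply Rmult_le_compat; lra.
    + right. field. lra.
Qed.

Lemma is_lim_seq_harmonic_div : is_lim_seq (fun N => zeta_partial 1 N / (2 * INR N + 1)) 0.
Proof.
  assert (Hinv : is_lim_seq (fun n => / INR (S n)) 0).
  { replace (Finite 0) with (Rbar_inv p_infty) by reflexivity.
    apply is_lim_seq_inv; [|discriminate].
    apply (is_lim_seq_incr_1 INR), is_lim_seq_INR. }
  assert (Hces : is_lim_seq (fun N => zeta_partial 1 (S N) / INR (S N)) 0).
  { pose proof (Cesaro_1 (fun n => / INR (S n)) 0) as H.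
    apply is_lim_seq_Reals in H; [|now apply is_lim_seq_Reals].
    apply is_lim_seq_incr_1 in H. eapply is_lim_seq_ext; [|exact H].
    intros n. cbv beta. simpl pred. rewrite sum_f_R0_psum. unfold zeta_partial, inv_pow_nat.
    f_equal. apply psum_ext; intros. now rewrite pow_1. }
  apply is_lim_seq_incr_1.
  apply (is_lim_seq_le_le (fun _ => 0) _ (fun N => zeta_partial 1 (S N) / INR (S N)));
    [intros n | apply is_lim_seq_const | exact Hces].
  assert (0 <= zeta_partial 1 (S n)).
  { apply psum_nonneg; intros m _. left. apply Rinv_0_lt_compat, pow_lt.
    pose proof (INR_S_ge1 m). lra. }
  pose proof (odd_pos (S n)). pose proof (INR_S_ge1 n). unfold Rdiv. split.
  - apply Rmult_le_pos; [lra|]. left. now apply Rinv_0_lt_compat.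
  - apply Rmult_le_compat_l; [lra|]. apply Rinv_le_contravar; lra.
Qed.

Lemma is_lim_seq_tail_error w : (forall m, 0 <= w m <= inv_pow_nat 2 m) ->
  is_lim_seq (tail_error w) 0.
Proof.
  intros Hw. apply (is_lim_seq_le_le (fun _ => 0) _ (fun N => zeta_partial 1 N / (2 * INR N + 1)));
    [intros N; now apply tail_error_bounds | apply is_lim_seq_const | apply is_lim_seq_harmonic_div].
Qed.

Lemma harmonic_double n : zeta_partial 1 (n + n) = odd_harmonic n + zeta_partial 1 n / 2.
Proof.
  induction n as [|n IH]; [unfold zeta_partial, odd_harmonic; simpl; field|].
  replace (S n + S n)%nat with (S (S (n + n))) by lia.
  unfold zeta_partial in *. rewrite !psum_S, IH.
  change (odd_harmonic (S n)) with (odd_harmonic n + / (2 * INR n + 1)).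
  unfold inv_pow_nat. rewrite !pow_1, !S_INR, plus_INR. pose proof (pos_INR n). field. lra.
Qed.

Lemma ln_le_sub_1 y : 0 < y -> ln y <= y - 1.
Proof.
  intros Hy. rewrite <- (ln_exp (y - 1)).
  apply ln_le; [exact Hy|]. pose proof (exp_ineq1_le (y - 1)). lra.
Qed.

Lemma ln_succ_sub_bounds x : 0 < x -> / (x + 1) <= ln (x + 1) - ln x <= / x.
Proof.
  intros Hx. split.
  - pose proof (ln_le_sub_1 (x / (x + 1))) as H.
    rewrite ln_div in H by lra.
    replace (x / (x + 1) - 1) with (- / (x + 1)) in H by (field; lra).
    enough (ln x - ln (x + 1) <= - / (x + 1)) by lra.
    apply H, Rdiv_lt_0_compat; lra.
  - pose proof (ln_le_sub_1 ((x + 1) / x)) as H.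
    rewrite ln_div in H by lra.
    replace ((x + 1) / x - 1) with (/ x) in H by (field; lra).
    apply H, Rdiv_lt_0_compat; lra.
Qed.

Lemma harmonic_sub_ln_decr n k : (1 <= n)%nat ->
  zeta_partial 1 (n + k) - ln (INR (n + k)) <= zeta_partial 1 n - ln (INR n).
Proof.
  intros Hn. induction k as [|k IH]; [rewrite Nat.add_0_r; lra|].
  rewrite Nat.add_succ_r.
  change (zeta_partial 1 (S (n + k))) with (zeta_partial 1 (n + k) + / INR (S (n + k)) ^ 1).
  rewrite pow_1, S_INR.
  assert (0 < INR (n + k)) by (apply lt_0_INR; lia).
  pose proof (ln_succ_sub_bounds (INR (n + k))). lra.
Qed.

Lemma harmonic_sub_ln_succ_incr n k :
  zeta_partial 1 n - ln (INR n + 1) <= zeta_partial 1 (n + k) - ln (INR (n + k) + 1).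
Proof.
  induction k as [|k IH]; [rewrite Nat.add_0_r; lra|].
  rewrite Nat.add_succ_r.
  change (zeta_partial 1 (S (n + k))) with (zeta_partial 1 (n + k) + / INR (S (n + k)) ^ 1).
  rewrite pow_1, S_INR. pose proof (pos_INR (n + k)).
  pose proof (ln_succ_sub_bounds (INR (n + k) + 1)). lra.
Qed.

Lemma harmonic_double_sub_bounds n : (1 <= n)%nat ->
  ln 2 - / (2 * INR n + 1) <= zeta_partial 1 (n + n) - zeta_partial 1 n <= ln 2.
Proof.
  intros Hn. assert (0 < INR n) by (apply lt_0_INR; lia).
  pose proof (harmonic_sub_ln_decr n n Hn) as Hdecr.
  pose proof (harmonic_sub_ln_succ_incr n n) as Hincr.
  pose proof (ln_succ_sub_bounds (2 * INR n + 1)) as Hstep.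
  rewrite plus_INR in Hdecr, Hincr.
  replace (INR n + INR n) with (2 * INR n) in Hdecr, Hincr by ring.
  replace (2 * INR n + 1 + 1) with (2 * (INR n + 1)) in Hstep by ring.
  rewrite ln_mult in Hdecr, Hstep by lra. lra.
Qed.

Lemma is_lim_seq_odd_harmonic_sub_half_harmonic :
  is_lim_seq (fun N => odd_harmonic N - zeta_partial 1 N / 2) (ln 2).
Proof.
  assert (Hinv : is_lim_seq (fun n => / (2 * INR (S n) + 1)) 0).
  { replace (Finite 0) with (Rbar_inv p_infty) by reflexivity.
    apply is_lim_seq_inv; [|discriminate].
    apply (is_lim_seq_le_p_loc INR); [|apply is_lim_seq_INR].
    exists 0%nat. intros n _. rewrite S_INR. pose proof (pos_INR n). lra. }
  pose proof (is_lim_seq_minus' _ _ _ _ (is_lim_seq_const (ln 2)) Hinv) as Hlow.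
  rewrite Rminus_0_r in Hlow.
  apply is_lim_seq_incr_1.
  apply (is_lim_seq_le_le (fun n => ln 2 - / (2 * INR (S n) + 1)) _ (fun _ => ln 2));
    [intros n | exact Hlow | apply is_lim_seq_const].
  replace (odd_harmonic (S n) - zeta_partial 1 (S n) / 2)
    with (zeta_partial 1 (S n + S n) - zeta_partial 1 (S n)) by (rewrite harmonic_double; field).
  apply harmonic_double_sub_bounds. lia.
Qed.

Lemma psum_inv_pow_partial_fraction x z b : x <> 0 -> z <> 0 -> x - z <> 0 ->
  psum (fun j => / x ^ (b - j) * / z ^ S j) b = / (x - z) * (/ z ^ b - / x ^ b).
Proof.
  intros Hx Hz Hxz. induction b as [|b IH]; [simpl; field; exact Hxz|].
  rewrite psum_S.
  rewrite (psum_ext _ (fun j => / x * (/ x ^ (b - j) * / z ^ S j))).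
  2:{ intros j Hj. replace (S b - j)%nat with (S (b - j)) by lia.
      simpl. rewrite Rinv_mult. ring. }
  rewrite psum_scal_l, IH. replace (S b - b)%nat with 1%nat by lia.
  assert (x ^ b <> 0) by now apply pow_nonzero.
  assert (z ^ b <> 0) by now apply pow_nonzero.
  simpl. field. tauto.
Qed.

Lemma pow_neg_half_inv j y : (-1) ^ j / 2 ^ j * / y ^ j = / (- (2 * y)) ^ j.
Proof.
  replace (- (2 * y)) with (/ -1 * 2 * y) by field.
  rewrite !Rpow_mult_distr, !Rinv_mult, pow_inv, Rinv_inv. reflexivity.
Qed.

Definition cross_sum (b N : nat) : R :=
  psum (fun j => (-1) ^ (j + 1) / 2 ^ (j + 1) * lambda_partial (b - j) N * zeta_partial (j + 1) N) b.

Lemma cross_sum_double b N : cross_sum b N =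
  psum (fun k => psum (fun m => / (2 * INR (S m + k) + 1) *
        (/ (- (2 * INR (S m))) ^ b - inv_pow_odd b k)) N) N.
Proof.
  unfold cross_sum, lambda_partial, zeta_partial.
  rewrite (psum_ext _ (fun j => psum (fun k => psum (fun m =>
     / (2 * INR k + 1) ^ (b - j) * / (- (2 * INR (S m))) ^ S j) N) N)).
  2:{ intros j _. rewrite Rmult_assoc, psum_mult, <- psum_scal_l.
      apply psum_ext; intros k _. rewrite <- psum_scal_l.
      apply psum_ext; intros m _. unfold inv_pow_nat, inv_pow_odd.
      rewrite Nat.add_1_r, <- pow_neg_half_inv. ring. }
  rewrite psum_swap. apply psum_ext; intros k _.
  rewrite psum_swap. apply psum_ext; intros m _.
  pose proof (odd_pos k). pose proof (INR_S_ge1 m).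
  rewrite psum_inv_pow_partial_fraction by lra.
  unfold inv_pow_odd. rewrite plus_INR. f_equal. f_equal. ring.
Qed.

Lemma odd_harmonic_block m N :
  psum (fun k => / (2 * INR (m + k) + 1)) N = odd_harmonic (m + N) - odd_harmonic m.
Proof. apply (psum_shift (fun i => / (2 * INR i + 1))). Qed.

Lemma psum_odd_harmonic_block_weighted w N :
  psum (fun m => (odd_harmonic (S m + N) - odd_harmonic (S m)) * w m) N =
  tail_error w N + odd_harmonic N * psum w N - psum (fun m => odd_harmonic (S m) * w m) N.
Proof.
  unfold tail_error. rewrite <- psum_scal_l, <- psum_plus, <- psum_minus.
  apply psum_ext; intros; ring.
Qed.

Lemma cross_sum_eval b N : cross_sum b N =
  (-1) ^ b / 2 ^ b * (tail_error (inv_pow_nat b) N + odd_harmonic N * zeta_partial b N - J_partial b N)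
  - (tail_error (inv_pow_odd b) N + odd_harmonic N * lambda_partial b N - Jbar_partial b N).
Proof.
  rewrite cross_sum_double.
  rewrite (psum_ext _ (fun k =>
      psum (fun m => / (- (2 * INR (S m))) ^ b * / (2 * INR (S m + k) + 1)) N
    - inv_pow_odd b k * psum (fun m => / (2 * INR (S k + m) + 1)) N)).
  2:{ intros k _. rewrite <- psum_scal_l, <- psum_minus. apply psum_ext; intros m _.
      replace (S k + m)%nat with (S m + k)%nat by lia. unfold inv_pow_odd. ring. }
  rewrite psum_minus, psum_swap.
  unfold zeta_partial, lambda_partial, J_partial, Jbar_partial.
  rewrite <- !psum_odd_harmonic_block_weighted, <- psum_scal_l.
  f_equal; apply psum_ext; intros m _.
  - rewrite psum_scal_l, odd_harmonic_block, <- pow_neg_half_inv. unfold inv_pow_nat. ring.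
  - rewrite odd_harmonic_block. ring.
Qed.

Lemma lambda_partial_1 N : lambda_partial 1 N = odd_harmonic N.
Proof. apply psum_ext; intros. unfold inv_pow_odd. now rewrite pow_1. Qed.

Lemma cross_sum_split b N : (2 <= b)%nat -> cross_sum b N =
  - / 2 * lambda_partial b N * zeta_partial 1 N
  + sum_n_m (fun j => (-1) ^ (j + 1) / 2 ^ (j + 1) * lambda_partial (b - j) N * zeta_partial (j + 1) N)
      1 (b - 2)
  + (-1) ^ b / 2 ^ b * odd_harmonic N * zeta_partial b N.
Proof.
  intros Hb. destruct b as [|[|c]]; [lia|lia|].
  unfold cross_sum. rewrite psum_S, psum_succ_l, sum_n_m_1_psum.
  replace (S (S c) - 2)%nat with c by lia.
  replace (S (S c) - S c)%nat with 1%nat by lia.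
  replace (S c + 1)%nat with (S (S c)) by lia.
  rewrite lambda_partial_1. simpl (S (S c) - 0)%nat. simpl (0 + 1)%nat.
  f_equal. f_equal. simpl. field.
Qed.

Lemma partial_sums_identity b N : (2 <= b)%nat ->
  Jbar_partial b N + (-1) ^ (b - 1) / 2 ^ b * J_partial b N =
  lambda_partial b N * (odd_harmonic N - zeta_partial 1 N / 2)
  + sum_n_m (fun j => (-1) ^ (j + 1) / 2 ^ (j + 1) * lambda_partial (b - j) N * zeta_partial (j + 1) N)
      1 (b - 2)
  + tail_error (inv_pow_odd b) N - (-1) ^ b / 2 ^ b * tail_error (inv_pow_nat b) N.
Proof.
  intros Hb. pose proof (cross_sum_eval b N) as Heval. rewrite cross_sum_split in Heval by exact Hb.
  replace ((-1) ^ (b - 1)) with (- (-1) ^ b).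
  2:{ destruct b as [|b]; [lia|]. rewrite Nat.sub_succ, Nat.sub_0_r. simpl. ring. }
  replace (- (-1) ^ b / 2 ^ b) with (- ((-1) ^ b / 2 ^ b)) by (unfold Rdiv; ring).
  set (p := (-1) ^ b / 2 ^ b) in *. lra.
Qed.

Lemma is_lim_seq_zeta_lambda_products b :
  is_lim_seq
    (fun N => sum_n_m (fun j => (-1) ^ (j + 1) / 2 ^ (j + 1) *
                         lambda_partial (b - j) N * zeta_partial (j + 1) N) 1 (b - 2))
    (sum_n_m (fun j => (-1) ^ (j + 1) / 2 ^ (j + 1) * lambda (b - j) * zeta (j + 1)) 1 (b - 2)).
Proof.
  apply is_lim_seq_sum_n_m; intros j Hj.
  apply is_lim_seq_mult'; [apply is_lim_seq_mult'; [apply is_lim_seq_const|] |];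
    [apply is_lim_seq_lambda_partial | apply is_lim_seq_zeta_partial]; lia.
Qed.

Theorem mainTheorem9 (b : nat) (hb : (2 <= b)%nat) :
  Jbar b + (-1) ^ (b - 1) / 2 ^ b * J b =
  lambda b * ln 2 +
  sum_n_m (fun j => (-1) ^ (j + 1) / 2 ^ (j + 1) * lambda (b - j) * zeta (j + 1)) 1 (b - 2).
Proof.
  assert (Hodd : forall m, 0 <= inv_pow_odd b m <= inv_pow_nat 2 m).
  { intros m. pose proof (inv_pow_odd_bounds b m). pose proof (inv_pow_nat_bounds b m hb). lra. }
  assert (Hleft := is_lim_seq_plus' _ _ _ _ (is_lim_seq_Jbar_partial b hb)
    (is_lim_seq_mult' _ _ _ _ (is_lim_seq_const ((-1) ^ (b - 1) / 2 ^ b)) (is_lim_seq_J_partial b hb))).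
  assert (Hright := is_lim_seq_minus' _ _ _ _
    (is_lim_seq_plus' _ _ _ _
      (is_lim_seq_plus' _ _ _ _
        (is_lim_seq_mult' _ _ _ _ (is_lim_seq_lambda_partial b hb)
          is_lim_seq_odd_harmonic_sub_half_harmonic)
        (is_lim_seq_zeta_lambda_products b))
      (is_lim_seq_tail_error _ Hodd))
    (is_lim_seq_mult' _ _ _ _ (is_lim_seq_const ((-1) ^ b / 2 ^ b))
      (is_lim_seq_tail_error _ (fun m => inv_pow_nat_bounds b m hb)))).
  apply is_lim_seq_unique in Hleft, Hright.
  erewrite Lim_seq_ext in Hleft by (intros N; now rewrite partial_sums_identity).
  rewrite Hleft in Hright. injection Hright as Heq. lra.
Qed.
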